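(* Let $b_{ij},c_{ij}\in\mathbb{R}$ ($i,j\in\{0,1\}$) with $D:=b_{10}-c_{10}-b_{00}+c_{00}\neq0$, and let $$\gamma=\frac{b_{00}-c_{00}-b_{01}+c_{01}}{D},\qquad \delta=\frac{b_{10}-c_{10}+b_{01}-c_{01}-b_{11}+c_{11}-b_{00}+c_{00}}{D}.$$ For an instance $x$ with $P_{11},P_{10}\in[0,1]$ and $t(x)=P_{11}-P_{10}$, define the expected causal profit $$E[\dot P\mid x]=\big[P_{11}(b_{11}-c_{11})+(1-P_{11})(b_{01}-c_{01})\big]-\big[P_{10}(b_{10}-c_{10})+(1-P_{10})(b_{00}-c_{00})\big]$$ and the displacement $d(x)=\dfrac{t(x)-\delta P_{11}-\gamma}{\sqrt{\delta^2+1}}$ from the line $t=\gamma+\delta P_{11}$. Then $E[\dot P\mid x]$ is proportional to $d(x)$, with a proportionality constant depending only on the cost and benefit parameters (not on $x$).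
   Context: $P_{1w}=P(Y=1\mid x,W=w)$ is the positive outcome probability of instance $x$ under treatment $w$; $b_{ij}$ is the benefit of outcome $i$ under treatment $j$ and $c_{ij}$ the cost of outcome $i$ under treatment $j$. The line $t=\gamma+\delta P_{11}$ is the cost-sensitive causal classification decision boundary. *)

From Stdlib Require Import Reals.
Open Scope R_scope.

(* Cost/benefit parameters: b i j, c i j for outcome i and treatment j. *)

Definition Dden (b c : bool -> bool -> R) : R :=
  b true false - c true false - b false false + c false false.

Definition gamma_ (b c : bool -> bool -> R) : R :=
  (b false false - c false false - b false true + c false true) / Dden b c.

Definition delta_ (b c : bool -> bool -> R) : R :=
  (b true false - c true false + b false true - c false true
   - b true true + c true true - b false false + c false false) / Dden b c.

(* Expected causal profit, P11 = P(Y=1|x,W=1), P10 = P(Y=1|x,W=0). *)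
Definition expected_profit (b c : bool -> bool -> R) (P11 P10 : R) : R :=
  (P11 * (b true true - c true true) + (1 - P11) * (b false true - c false true))
  - (P10 * (b true false - c true false) + (1 - P10) * (b false false - c false false)).

Definition uplift (P11 P10 : R) : R := P11 - P10.

Definition displacement (b c : bool -> bool -> R) (P11 P10 : R) : R :=
  (uplift P11 P10 - delta_ b c * P11 - gamma_ b c) / sqrt (delta_ b c ^ 2 + 1).

(* The expected causal profit is affine in (P11, P10), and its coefficient of
   P10 is -D.  Dividing by -D shows that it equals D (t - delta P11 - gamma),
   so the line t = gamma + delta P11 is exactly its zero set, and the
   displacement differs from it by the positive factor sqrt (delta^2 + 1).
   The identities are polynomial. *)

From Stdlib Require Import Reals Lra.
Open Scope R_scope.

Lemma expected_profit_line_form (b c : bool -> bool -> R) (P11 P10 : R) :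
  Dden b c <> 0 ->
  expected_profit b c P11 P10
  = Dden b c * (uplift P11 P10 - delta_ b c * P11 - gamma_ b c).
Proof.
  intros HD; unfold expected_profit, uplift, delta_, gamma_, Dden in *.
  field; exact HD.
Qed.

Lemma sqrt_sqr_add1_gt0 (x : R) : 0 < sqrt (x ^ 2 + 1).
Proof. apply sqrt_lt_R0; pose proof (pow2_ge_0 x); lra. Qed.

Lemma displacement_scaled (b c : bool -> bool -> R) (P11 P10 : R) :
  sqrt (delta_ b c ^ 2 + 1) * displacement b c P11 P10
  = uplift P11 P10 - delta_ b c * P11 - gamma_ b c.
Proof.
  unfold displacement; field.
  apply Rgt_not_eq, sqrt_sqr_add1_gt0.
Qed.

Theorem proposition3 (b c : bool -> bool -> R) :
  Dden b c <> 0 ->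
  exists K : R, K <> 0 /\
    forall P11 P10 : R, 0 <= P11 <= 1 -> 0 <= P10 <= 1 ->
      expected_profit b c P11 P10 = K * displacement b c P11 P10.
Proof.
  intros HD.
  exists (Dden b c * sqrt (delta_ b c ^ 2 + 1)); split.
  - apply Rmult_integral_contrapositive_currified; [exact HD |].
    apply Rgt_not_eq, sqrt_sqr_add1_gt0.
  - intros P11 P10 _ _.
    rewrite expected_profit_line_form by exact HD.
    rewrite Rmult_assoc, displacement_scaled; reflexivity.
Qed.
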